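(* Let $K=\mathbb{C}_p$ with residue field $k$, let $F$ be a restricted lift of $p$-th power and let $\bar F$ be its reduction. Then the reduction map $\mathrm{red}$ restricted to $\mathrm{Per}(F)$ is a bijection from $\mathrm{Per}(F)$ onto $\mathrm{Per}(\bar F)$.
   Context: $K=\mathbb{C}_p$ with absolute value $|\cdot|$, valuation ring $K^\circ$, maximal ideal $K^{\circ\circ}$, residue field $k=K^\circ/K^{\circ\circ}$ (algebraically closed). A restricted lift of $p$-th power is a morphism $F=(F_1,\dots,F_N)$ of $\mathbb{A}^N_K$ with $F_i\in K^\circ[X_1,\dots,X_N]$ such that there exist $\varpi\in K^\circ$ with $|p|\le|\varpi|<1$ and $G_i\in K^\circ[X_1,\dots,X_N]$ with $F_i\equiv G_i^p\pmod\varpi$, and such that $F$ maps $K^N\setminus(K^\circ)^N$ into itself with $\max_i|F_i(x)|>\max_i|x_i|$ there. $\bar F=(\bar F_1,\dots,\bar F_N)$ where $\bar F_i$ is obtained from $F_i$ by reducing coefficients modulo $K^{\circ\circ}$. The reduction map $\mathrm{red}:K^N\to k^N\cup\{\infty\}$ sends $x\in(K^\circ)^N$ to its coordinatewise reduction and points outside $(K^\circ)^N$ to $\infty$. $\mathrm{Per}(F)\subseteq K^N$ and $\mathrm{Per}(\bar F)\subseteq k^N$ are the sets of points fixed by some iterate. *)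

From HB Require Import structures.
From mathcomp Require Import all_boot all_order all_algebra.
From mathcomp Require Import reals.
From mathcomp Require Import mpoly.

Set Implicit Arguments.
Unset Strict Implicit.
Unset Printing Implicit Defensive.

Import Order.TTheory GRing.Theory Num.Theory.
Local Open Scope ring_scope.

Section Defs.
Variables (R : realType) (K : fieldType).

Definition nonarch_abs (v : K -> R) : Prop :=
  [/\ forall x, 0 <= v x,
      forall x, v x = 0 <-> x = 0,
      forall x y, v (x * y) = v x * v y &
      forall x y, v (x + y) <= Num.max (v x) (v y)].

Definition abs_complete (v : K -> R) : Prop :=
  forall u : nat -> K,
    (forall e : R, 0 < e -> exists M, forall m n, (M <= m)%N -> (M <= n)%N ->
        v (u m - u n) < e) ->
    exists l : K, forall e : R, 0 < e -> exists M, forall n, (M <= n)%N ->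
        v (u n - l) < e.

Definition algebraic_over_Q (x : K) : Prop :=
  exists q : {poly rat}, q != 0 /\ root (map_poly (@ratr K) q) x.

(* (K, v) is (isometrically isomorphic to) C_p: an algebraically closed
   complete non-archimedean valued field of characteristic 0 with
   |p| = 1/p in which the algebraic closure of Q is dense. *)
Definition is_Cp (p : nat) (v : K -> R) : Prop :=
  [/\ prime p,
      [pchar K] =i pred0,
      (forall P : {poly K}, (1 < size P)%N -> exists z, root P z),
      nonarch_abs v &
   [/\ abs_complete v,
      v (p%:R) = (p%:R)^-1 &
      forall x (e : R), 0 < e -> exists y, algebraic_over_Q y /\ v (x - y) < e]].

Definition in_Ko (v : K -> R) (x : K) : Prop := v x <= 1.

(* (k, r) is the residue field K°/K°° : r restricted to K° is a surjective
   ring morphism onto k with kernel K°° = {x | v x < 1} *)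
Definition is_residue_map (v : K -> R) (k : fieldType) (r : K -> k) : Prop :=
  [/\ forall x y, in_Ko v x -> in_Ko v y -> r (x + y) = r x + r y,
      forall x y, in_Ko v x -> in_Ko v y -> r (x * y) = r x * r y,
      r 1 = 1,
      forall x, in_Ko v x -> (r x = 0 <-> v x < 1) &
      forall y : k, exists x, in_Ko v x /\ r x = y].

Variable N : nat.

Definition poly_Ko (v : K -> R) (P : {mpoly K[N]}) : Prop :=
  forall m, in_Ko v P@_m.

Definition polymap (L : ringType) (F : 'I_N -> {mpoly L[N]}) (x : 'I_N -> L)
  : 'I_N -> L := fun i => (F i).@[x].

Definition point_Ko (v : K -> R) (x : 'I_N -> K) : Prop :=
  forall i, in_Ko v (x i).

Definition maxabs (v : K -> R) (x : 'I_N -> K) : R := \big[Num.max/0]_i v (x i).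

Definition restricted_lift (p : nat) (v : K -> R) (F : 'I_N -> {mpoly K[N]})
  : Prop :=
  [/\ forall i, poly_Ko v (F i),
      (exists (w : K) (G : 'I_N -> {mpoly K[N]}),
         [/\ v (p%:R) <= v w, v w < 1, forall i, poly_Ko v (G i) &
             (* F_i = G_i^p mod w K°[X] *)
             forall i m, v ((F i - G i ^+ p)@_m) <= v w]) &
      forall x, ~ point_Ko v x ->
        ~ point_Ko v (polymap F x) /\ maxabs v x < maxabs v (polymap F x)].

Definition red_poly (k : fieldType) (r : K -> k) (P : {mpoly K[N]}) : {mpoly k[N]} :=
  \sum_(m <- msupp P) r P@_m *: 'X_[m].

(* reduction map K^N -> k^N u {oo} ; None stands for oo *)
Definition red (v : K -> R) (k : fieldType) (r : K -> k) (x : 'I_N -> K)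
  : option ('I_N -> k) :=
  if [forall i, v (x i) <= 1] then Some (fun i => r (x i)) else None.
End Defs.

Definition Per (T : Type) (f : T -> T) (x : T) : Prop :=
  exists n, (0 < n)%N /\ iter n f x = x.

From HB Require Import structures.
From mathcomp Require Import all_boot all_order all_algebra.
From mathcomp Require Import reals mpoly boolp.
Import Order.TTheory GRing.Theory Num.Theory.

(* Periodic points of F are integral, since off (K°)^N the max-norm strictly increases along
   orbits, and on (K°)^N reduction commutes with F; so red maps Per(F) into Per(Fbar).
   As F = G^p mod w and |p| <= |w| < 1, F contracts the sup-distance d < 1 of two integral
   points by the factor max(|w|, d) < 1. Hence two periodic points in one residue disc
   coincide (iterate a common period), and if Fbar^n y = y, then F^n is a contraction of the
   residue disc of a lift of y, whose fixed point (by completeness) is the periodic lift. *)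

Set Implicit Arguments.
Unset Strict Implicit.
Unset Printing Implicit Defensive.
Local Open Scope ring_scope.

Section Periodic.
Variables (T : Type) (f : T -> T).

Lemma Per_common x y : Per f x -> Per f y ->
  exists n, (0 < n)%N /\ iter n f x = x /\ iter n f y = y.
Proof.
move=> [m [m_gt0 fx]] [n [n_gt0 fy]]; exists (m * n)%N.
split; first by rewrite muln_gt0 m_gt0.
by split; [rewrite mulnC|]; rewrite iterM iter_fix.
Qed.

Lemma Per_escape (d : Order.disp_t) (O : porderType d) (P : T -> Prop) (h : T -> O) x :
  (forall y, ~ P y -> ~ P (f y) /\ (h y < h (f y))%O) -> Per f x -> P x.
Proof.
move=> escape [n [n_gt0 fx]]; apply: contrapT => nPx.
have orbit j : ~ P (iter j f x) /\ (h x <= h (iter j f x))%O.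
  elim: j => [|j [nPj le_j]] //=; have [nPf lt_f] := escape _ nPj.
  by split=> //; apply: le_trans (ltW lt_f).
case: n n_gt0 fx => // n _ fx; have [nPn le_n] := orbit n.
by have := le_lt_trans le_n (escape _ nPn).2; rewrite -iterS fx ltxx.
Qed.

End Periodic.

Section Geometric.
Variable R : realType.

Lemma geometric_lt (q D e : R) :
  0 <= q -> q < 1 -> 0 < e -> exists M : nat, q ^+ M * D < e.
Proof.
move=> q_ge0 q_lt1 e_gt0.
have [->|q_neq0] := eqVneq q 0; first by exists 1%N; rewrite expr1 mul0r.
have q_gt0 : 0 < q by rewrite lt_def q_neq0.
pose h := q^-1 - 1; have h_gt0 : 0 < h by rewrite subr_gt0 invf_gt1.
(* Bernoulli: q^-M = (1 + h)^M >= M h, which exceeds |D| / e for M large. *)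
pose M := Num.Def.archi_bound (`|D| / (e * h)).
have M_big : `|D| < e * (M%:R * h).
  rewrite mulrCA -ltr_pdivrMr ?mulr_gt0 //.
  by apply: archi_boundP; rewrite divr_ge0 // ltW ?mulr_gt0.
have bernoulli : M%:R * h <= q^-1 ^+ M.
  have -> : q^-1 = 1 + h by rewrite addrC subrK.
  elim: (M) => [|m IHm]; first by rewrite mul0r expr0.
  rewrite exprS -natr1 mulrDl mul1r mulrDl mul1r.
  apply: lerD IHm _; rewrite -{1}[h]mulr1 ler_pM2l //.
  by rewrite exprn_ege1 // lerDl ltW.
exists M; rewrite mulrC -ltr_pdivlMr ?exprn_gt0 // -exprVn.
apply: le_lt_trans (ler_norm D) _; apply: lt_le_trans M_big _.
by rewrite ler_pM2l.
Qed.

Lemma geometric_le0 (q D d : R) :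
  0 <= q -> q < 1 -> (forall m, d <= q ^+ m * D) -> d <= 0.
Proof.
move=> q_ge0 q_lt1 le_d; rewrite leNgt; apply/negP => d_gt0.
have [M lt_M] := geometric_lt D q_ge0 q_lt1 d_gt0.
by have := le_lt_trans (le_d M) lt_M; rewrite ltxx.
Qed.

End Geometric.

Section NonArchimedean.
Variables (R : realType) (K : fieldType) (v : K -> R).
Hypothesis hv : nonarch_abs v.

Lemma v_ge0 x : 0 <= v x. Proof. by case: hv. Qed.

Lemma v_eq0 x : v x = 0 <-> x = 0. Proof. by case: hv. Qed.

Lemma v0 : v 0 = 0. Proof. exact/v_eq0. Qed.

Lemma vM x y : v (x * y) = v x * v y. Proof. by case: hv. Qed.

Lemma v1 : v 1 = 1.
Proof.
have v1_neq0 : v 1 != 0 by apply/eqP => /v_eq0/eqP; rewrite oner_eq0.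
by apply: (mulfI v1_neq0); rewrite -vM !mulr1.
Qed.

Lemma vX x n : v (x ^+ n) = v x ^+ n.
Proof. by elim: n => [|n IHn]; rewrite ?expr0 ?v1 // !exprS vM IHn. Qed.

Lemma vN x : v (- x) = v x.
Proof.
have vN1 : v (-1) = 1.
  apply/eqP; rewrite -(@pexpr_eq1 _ _ 2) ?v_ge0 //.
  by rewrite expr2 -vM mulrNN mulr1 v1.
by rewrite -mulN1r vM vN1 mul1r.
Qed.

Lemma vBC x y : v (x - y) = v (y - x).
Proof. by rewrite -opprB vN. Qed.

Lemma vD_le x y (B : R) : v x <= B -> v y <= B -> v (x + y) <= B.
Proof.
case: hv => _ _ _ vD vx vy; apply: le_trans (vD x y) _.
by rewrite ge_max vx vy.
Qed.

Lemma vD_lt x y (B : R) : v x < B -> v y < B -> v (x + y) < B.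
Proof.
case: hv => _ _ _ vD vx vy; apply: le_lt_trans (vD x y) _.
by rewrite gt_max vx vy.
Qed.

Lemma vB_trans_le x y z (B : R) : v (x - y) <= B -> v (y - z) <= B -> v (x - z) <= B.
Proof. by move=> vxy vyz; rewrite -[x](subrK y) -addrA vD_le. Qed.

Lemma vsum_le (I : Type) (s : seq I) (P : pred I) (F : I -> K) (B : R) :
  0 <= B -> (forall i, P i -> v (F i) <= B) -> v (\sum_(i <- s | P i) F i) <= B.
Proof.
move=> B_ge0 vF; apply: (big_ind (fun x => v x <= B)) => //; first by rewrite v0.
by move=> x y; apply: vD_le.
Qed.

Definition close_Ko (d : R) (a b : K) := [/\ v a <= 1, v b <= 1 & v (a - b) <= d].

Lemma close_Ko_refl d a : 0 <= d -> v a <= 1 -> close_Ko d a a.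
Proof. by move=> d_ge0 va; split; rewrite ?subrr ?v0. Qed.

Lemma close_KoM d a b a' b' : 0 <= d ->
  close_Ko d a b -> close_Ko d a' b' -> close_Ko d (a * a') (b * b').
Proof.
move=> d_ge0 [va vb vab] [va' vb' vab']; split; rewrite ?vM ?mulr_ile1 ?v_ge0 //.
rewrite -[a * a'](subrK (b * a')) -!mulrBl -addrA -mulrBr.
by apply: vD_le; rewrite vM; [rewrite -[d]mulr1 | rewrite -[d]mul1r]; rewrite ler_pM ?v_ge0.
Qed.

Lemma close_KoX d a b n : 0 <= d -> close_Ko d a b -> close_Ko d (a ^+ n) (b ^+ n).
Proof.
move=> d_ge0 ab; elim: n => [|n IHn]; last by rewrite !exprS; apply: close_KoM.
by rewrite !expr0; apply: close_Ko_refl; rewrite ?v1.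
Qed.

(* a^p - b^p = (a - b) * sum_i a^(p-1-i) b^i, and the sum is p b^(p-1) up to terms of
   size |a - b|. *)
Lemma vXB_le (p : nat) a b : v a <= 1 -> v b <= 1 ->
  v (a ^+ p - b ^+ p) <= v (a - b) * Num.max (v p%:R) (v (a - b)).
Proof.
move=> va vb; set d := v (a - b); have d_ge0 : 0 <= d := v_ge0 _.
rewrite subrXX vM ler_wpM2l //.
pose c := b ^+ p.-1.
have -> : \sum_(i < p) a ^+ (p.-1 - i) * b ^+ i =
          \sum_(i < p) (a ^+ (p.-1 - i) * b ^+ i - c) + c *+ p.
  by rewrite sumrB sumr_const card_ord subrK.
apply: vD_le.
  apply: vsum_le; first by rewrite le_max d_ge0 orbT.
  move=> i _; have -> : c = b ^+ (p.-1 - i) * b ^+ i.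
    by rewrite -exprD subnK // -ltnS (leq_trans (ltn_ord i)) // leqSpred.
  have [_ _ close] : close_Ko d (a ^+ (p.-1 - i) * b ^+ i) (b ^+ (p.-1 - i) * b ^+ i).
    apply: close_KoM => //; first by apply: close_KoX => //; split.
    by apply: close_Ko_refl; rewrite // vX exprn_ile1 ?v_ge0.
  by rewrite le_max close orbT.
rewrite -mulr_natr vM le_max; apply/orP; left.
by rewrite -[X in _ <= X]mul1r ler_pM ?v_ge0 // vX exprn_ile1 ?v_ge0.
Qed.

Section Points.
Variable N : nat.
Implicit Types (x y z : 'I_N -> K) (P : {mpoly K[N]}).

Definition vdist x y : R := \big[Num.max/0]_i v (x i - y i).

Lemma vdist_ge0 x y : 0 <= vdist x y.
Proof.
apply: (big_ind (fun t => 0 <= t)) => // [s t s_ge0 _|i _]; last exact: v_ge0.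
by rewrite le_max s_ge0.
Qed.

Lemma le_vdist x y i : v (x i - y i) <= vdist x y.
Proof. by rewrite /vdist (bigD1 i) //= le_max lexx. Qed.

Lemma vdist_le x y (t : R) : 0 <= t -> (forall i, v (x i - y i) <= t) -> vdist x y <= t.
Proof.
by move=> t_ge0 le_t; apply: (big_ind (fun s => s <= t)) => // s s'; rewrite ge_max => ->.
Qed.

Lemma vdist_lt x y (t : R) : 0 < t -> (forall i, v (x i - y i) < t) -> vdist x y < t.
Proof.
by move=> t_gt0 lt_t; apply: (big_ind (fun s => s < t)) => // s s'; rewrite gt_max => ->.
Qed.

Lemma vdistC x y : vdist x y = vdist y x.
Proof. by apply: eq_bigr => i _; rewrite vBC. Qed.

Lemma vdist_trans_le x y z (t : R) : vdist x y <= t -> vdist y z <= t -> vdist x z <= t.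
Proof.
move=> xy yz; apply: vdist_le => [|i]; first exact: le_trans (vdist_ge0 _ _) xy.
by apply: vB_trans_le (le_trans (le_vdist _ _ i) xy) (le_trans (le_vdist _ _ i) yz).
Qed.

Lemma vdist_le0 x y : vdist x y <= 0 -> x = y.
Proof.
move=> le0; apply/funext => i; apply/eqP; rewrite -subr_eq0; apply/eqP/v_eq0.
by apply/eqP; rewrite eq_le v_ge0 andbT (le_trans (le_vdist _ _ i)).
Qed.

Lemma point_Ko_vdist x y : point_Ko v y -> vdist x y <= 1 -> point_Ko v x.
Proof.
move=> yKo xy i; rewrite /in_Ko -[x i](subrK (y i)).
exact: vD_le (le_trans (le_vdist _ _ i) xy) (yKo i).
Qed.

Lemma vdist_Ko_le1 x y : point_Ko v x -> point_Ko v y -> vdist x y <= 1.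
Proof. by move=> xKo yKo; apply: vdist_le => // i; rewrite vD_le ?vN ?xKo ?yKo. Qed.

Lemma monomial_close_Ko (m : 'X_{1.. N}) x y : point_Ko v x -> point_Ko v y ->
  close_Ko (vdist x y) (\prod_i x i ^+ m i) (\prod_i y i ^+ m i).
Proof.
move=> xKo yKo; have d_ge0 := vdist_ge0 x y.
apply: (big_ind2 (close_Ko (vdist x y))) => [|a b a' b'|i _].
- by apply: close_Ko_refl; rewrite ?v1.
- exact: close_KoM.
by apply: close_KoX => //; split; [exact: xKo | exact: yKo | exact: le_vdist].
Qed.

Lemma meval_le P x (B : R) : 0 <= B -> (forall m, v P@_m <= B) -> point_Ko v x ->
  v P.@[x] <= B.
Proof.
move=> B_ge0 vP xKo; rewrite mevalE; apply: vsum_le => // m _.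
have [vm _ _] := monomial_close_Ko m xKo xKo.
by rewrite vM -[B]mulr1 ler_pM ?v_ge0.
Qed.

Lemma meval_lipschitz P x y (B : R) : 0 <= B -> (forall m, v P@_m <= B) ->
  point_Ko v x -> point_Ko v y -> v (P.@[x] - P.@[y]) <= B * vdist x y.
Proof.
move=> B_ge0 vP xKo yKo; rewrite !mevalE -sumrB.
apply: vsum_le => [|m _]; first by rewrite mulr_ge0 ?vdist_ge0.
have [_ _ vm] := monomial_close_Ko m xKo yKo.
by rewrite -mulrBr vM ler_pM ?v_ge0.
Qed.

Hypothesis complete : abs_complete v.

Lemma geometric_cauchy_lim1 (q D : R) (a : nat -> K) : 0 <= q -> q < 1 ->
  (forall m j, v (a (m + j)%N - a m) <= q ^+ m * D) ->
  exists l, forall m, v (a m - l) <= q ^+ m * D.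
Proof.
move=> q_ge0 q_lt1 tail.
have [l lim_l] : exists l, forall e, 0 < e ->
    exists M, forall n, (M <= n)%N -> v (a n - l) < e.
  apply: complete => e e_gt0; have [M lt_M] := geometric_lt D q_ge0 q_lt1 e_gt0.
  exists M => m n /subnKC <- /subnKC <-.
  rewrite -[a (M + _)%N](subrK (a M)) -addrA.
  by apply: vD_lt; last rewrite vBC; apply: le_lt_trans (tail _ _) lt_M.
exists l => m; rewrite leNgt; apply/negP => lt_m.
have e_gt0 : 0 < v (a m - l) - q ^+ m * D by rewrite subr_gt0.
have [M lt_M] := lim_l _ e_gt0.
have tail_ge0 : 0 <= q ^+ m * D by have := tail m 0%N; rewrite addn0 subrr v0.
have : v (a m - l) < v (a m - l).
  rewrite -{1}(subrKA (a (m + M)%N) (a m) (- l)).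
  apply: vD_lt; first by rewrite vBC; apply: le_lt_trans (tail _ _) lt_m.
  by apply: lt_le_trans (lt_M _ (leq_addl _ _)) _; rewrite gerBl.
by rewrite ltxx.
Qed.

Lemma geometric_cauchy_lim (q D : R) (u : nat -> 'I_N -> K) : 0 <= q -> q < 1 ->
  (forall m j, vdist (u (m + j)%N) (u m) <= q ^+ m * D) ->
  exists l, forall m, vdist (u m) l <= q ^+ m * D.
Proof.
move=> q_ge0 q_lt1 tail.
have [l lim_l] : exists l : 'I_N -> K, forall i m, v (u m i - l i) <= q ^+ m * D.
  apply: (@fin_all_exists _ (fun=> K) (fun i li => forall m, v (u m i - li) <= _)).
  move=> i; apply: geometric_cauchy_lim1 => // m j.
  exact: le_trans (le_vdist _ _ i) (tail m j).
exists l => m; apply: vdist_le => //.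
exact: le_trans (vdist_ge0 _ _) (tail m 0%N).
Qed.

Lemma ultrametric_fixed_point (g : ('I_N -> K) -> 'I_N -> K) x0 (q d0 : R) :
  0 <= q -> q < 1 -> vdist (g x0) x0 <= d0 ->
  (forall a b, vdist a x0 <= d0 -> vdist b x0 <= d0 ->
     vdist (g a) (g b) <= q * vdist a b) ->
  exists2 l, g l = l & vdist l x0 <= d0.
Proof.
move=> q_ge0 q_lt1 gx0 contract.
have d0_ge0 : 0 <= d0 := le_trans (vdist_ge0 _ _) gx0.
have x0_ball : vdist x0 x0 <= d0 by apply: vdist_le => // i; rewrite subrr v0.
have qd_le (t : R) : 0 <= t -> q * t <= t by move=> t_ge0; rewrite ler_piMl // ltW.
have ball_g a : vdist a x0 <= d0 -> vdist (g a) x0 <= d0.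
  move=> ax0; apply: vdist_trans_le gx0.
  exact: le_trans (contract _ _ ax0 x0_ball) (le_trans (qd_le _ (vdist_ge0 _ _)) ax0).
pose u m := iter m g x0.
have u_ball m : vdist (u m) x0 <= d0 by elim: m => //= m; apply: ball_g.
have geom_ge0 m : 0 <= q ^+ m * d0 by rewrite mulr_ge0 ?exprn_ge0.
have geom_le m j : q ^+ (m + j) * d0 <= q ^+ m * d0.
  by rewrite exprD -mulrA ler_wpM2l ?exprn_ge0 // ler_piMl // exprn_ile1 // ltW.
have u_step m : vdist (u m.+1) (u m) <= q ^+ m * d0.
  elim: m => [|m IHm]; first by rewrite expr0 mul1r.
  apply: le_trans (contract (u m.+1) (u m) (u_ball _) (u_ball _)) _.
  by rewrite exprS -mulrA ler_wpM2l.
have u_tail m j : vdist (u (m + j)%N) (u m) <= q ^+ m * d0.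
  elim: j => [|j IHj].
    by rewrite addn0; apply: vdist_le (geom_ge0 m) _ => i; rewrite subrr v0 geom_ge0.
  by rewrite addnS; apply: vdist_trans_le IHj; apply: le_trans (u_step _) (geom_le _ _).
have [l u_l] := geometric_cauchy_lim q_ge0 q_lt1 u_tail.
have l_ball : vdist l x0 <= d0 by have := u_l 0%N; rewrite expr0 mul1r vdistC.
exists l => //; apply: vdist_le0; apply: (@geometric_le0 _ q d0) => // m.
apply: (@vdist_trans_le _ (g (u m))).
  apply: le_trans (contract _ _ l_ball (u_ball m)) _.
  by rewrite vdistC; apply: le_trans (qd_le _ (vdist_ge0 _ _)) (u_l m).
by apply: le_trans (u_l m.+1 : vdist (g (u m)) l <= _) _; rewrite -addn1 geom_le.
Qed.

Section Contraction.
Variables (f : ('I_N -> K) -> 'I_N -> K) (s : R).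
Hypotheses (s_lt1 : s < 1) (f_Ko : forall x, point_Ko v x -> point_Ko v (f x))
  (f_contract : forall x y, point_Ko v x -> point_Ko v y ->
     vdist (f x) (f y) <= Num.max s (vdist x y) * vdist x y).

Lemma iter_Ko n x : point_Ko v x -> point_Ko v (iter n f x).
Proof. by move=> xKo; elim: n => //= n; apply: f_Ko. Qed.

Lemma iter_contract n x y : point_Ko v x -> point_Ko v y ->
  vdist (iter n f x) (iter n f y) <= Num.max s (vdist x y) ^+ n * vdist x y.
Proof.
move=> xKo yKo; set d := vdist x y; set c := Num.max s d.
have c_ge0 : 0 <= c by rewrite le_max vdist_ge0 orbT.
have c_le1 : c <= 1 by rewrite ge_max (ltW s_lt1) vdist_Ko_le1.
elim: n => [|n IHn]; first by rewrite expr0 mul1r.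
have le_d : vdist (iter n f x) (iter n f y) <= d.
  by apply: le_trans IHn _; rewrite ler_piMl ?vdist_ge0 ?exprn_ile1.
rewrite exprS -mulrA; apply: le_trans (f_contract (iter_Ko _ xKo) (iter_Ko _ yKo)) _.
apply: ler_pM; rewrite ?vdist_ge0 //; first by rewrite le_max vdist_ge0 orbT.
by rewrite ge_max !le_max lexx le_d orbT.
Qed.

Lemma Per_vdist_lt1_eq x y : Per f x -> Per f y -> point_Ko v x -> point_Ko v y ->
  vdist x y < 1 -> x = y.
Proof.
move=> Px Py xKo yKo xy_lt1; have [n [n_gt0 [fx fy]]] := Per_common Px Py.
have c_ge0 : 0 <= Num.max s (vdist x y) by rewrite le_max vdist_ge0 orbT.
have c_lt1 : Num.max s (vdist x y) < 1 by rewrite gt_max s_lt1.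
apply: vdist_le0; rewrite leNgt; apply/negP => d_gt0.
have := iter_contract n xKo yKo; rewrite fx fy.
by rewrite leNgt gtr_pMl // exprn_ilt1 // -lt0n n_gt0.
Qed.

Lemma iter_fixed_point n x0 : (0 < n)%N -> point_Ko v x0 ->
  vdist (iter n f x0) x0 < 1 -> exists2 l, iter n f l = l & vdist l x0 < 1.
Proof.
move=> n_gt0 x0Ko d0_lt1; set d0 := vdist (iter n f x0) x0.
have ball_Ko a : vdist a x0 <= d0 -> point_Ko v a.
  by move=> ax0; apply: point_Ko_vdist x0Ko (le_trans ax0 (ltW d0_lt1)).
have c_ge0 : 0 <= Num.max s d0 by rewrite le_max vdist_ge0 orbT.
have c_lt1 : Num.max s d0 < 1 by rewrite gt_max s_lt1.
have [||||l fl l_ball] := @ultrametric_fixed_point (iter n f) x0 (Num.max s d0 ^+ n) d0.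
- exact: exprn_ge0.
- by rewrite exprn_ilt1 // -lt0n.
- exact: lexx.
- move=> a b ax0 bx0; have ab : vdist a b <= d0.
    by apply: vdist_trans_le ax0 _; rewrite vdistC.
  apply: le_trans (iter_contract _ (ball_Ko _ ax0) (ball_Ko _ bx0)) _.
  rewrite ler_wpM2r ?vdist_ge0 //; apply: lerXn2r; rewrite ?nnegrE //.
    by rewrite le_max vdist_ge0 orbT.
  by rewrite ge_max !le_max lexx ab orbT.
by exists l; last exact: le_lt_trans l_ball d0_lt1.
Qed.

End Contraction.

Lemma polymap_Ko (F : 'I_N -> {mpoly K[N]}) :
  (forall i, poly_Ko v (F i)) -> forall x, point_Ko v x -> point_Ko v (polymap F x).
Proof. by move=> F_Ko x xKo i; apply: meval_le ler01 (F_Ko i) xKo. Qed.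

(* Writing F = G^p + (F - G^p): the first part contracts because p-th powers do and
   |p| <= |w|, the second because its coefficients are bounded by |w|. *)
Lemma restricted_lift_contract (p : nat) (F G : 'I_N -> {mpoly K[N]}) (w : K) :
  (forall i, poly_Ko v (F i)) -> (forall i, poly_Ko v (G i)) ->
  v p%:R <= v w -> (forall i m, v ((F i - G i ^+ p)@_m) <= v w) ->
  forall x y, point_Ko v x -> point_Ko v y ->
  vdist (polymap F x) (polymap F y) <= Num.max (v w) (vdist x y) * vdist x y.
Proof.
move=> F_Ko G_Ko vp_le FG_le x y xKo yKo.
set d := vdist x y; have d_ge0 : 0 <= d := vdist_ge0 x y.
apply: vdist_le => [|i]; first by rewrite mulr_ge0 // le_max d_ge0 orbT.
have split_F z : (F i).@[z] = (G i).@[z] ^+ p + (F i - G i ^+ p).@[z].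
  by rewrite mevalB rmorphXn /= addrC subrK.
rewrite /polymap !split_F opprD addrACA; apply: vD_le.
  have vGxy : v ((G i).@[x] - (G i).@[y]) <= d.
    by rewrite -[d]mul1r; apply: meval_lipschitz ler01 (G_Ko i) xKo yKo.
  apply: le_trans (vXB_le _ (meval_le ler01 (G_Ko i) xKo) (meval_le ler01 (G_Ko i) yKo)) _.
  rewrite mulrC; apply: ler_pM; rewrite ?v_ge0 //; first by rewrite le_max v_ge0.
  by rewrite ge_max !le_max vp_le vGxy !orbT.
apply: le_trans (meval_lipschitz (v_ge0 w) (FG_le i) xKo yKo) _.
by rewrite ler_wpM2r // le_max lexx.
Qed.

Section Residue.
Variables (k : fieldType) (r : K -> k).
Hypothesis hr : is_residue_map v r.

Lemma r0 : r 0 = 0.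
Proof.
have [rD _ _ _ _] := hr; have v0_le1 : in_Ko v 0 by rewrite /in_Ko v0.
by apply: (addrI (r 0)); rewrite -rD // !addr0.
Qed.

Lemma rB a b : v a <= 1 -> v b <= 1 -> r (a - b) = r a - r b.
Proof.
have [rD _ _ _ _] := hr; move=> va vb; have vNb : in_Ko v (- b) by rewrite /in_Ko vN.
apply: (addIr (r b)); rewrite subrK -rD ?subrK //.
by rewrite /in_Ko vD_le // vN.
Qed.

Lemma r_eq a b : v a <= 1 -> v b <= 1 -> (r a = r b <-> v (a - b) < 1).
Proof.
have [_ _ _ r_eq0 _] := hr; move=> va vb.
rewrite -r_eq0 ?rB //; last by rewrite /in_Ko vD_le ?vN.
by split => [->|/eqP]; [rewrite subrr | rewrite subr_eq0 => /eqP].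
Qed.

Lemma red_eq x y : point_Ko v x -> point_Ko v y ->
  ((fun i => r (x i)) = (fun i => r (y i)) <-> vdist x y < 1).
Proof.
move=> xKo yKo; split => [rxy|xy_lt1].
  apply: vdist_lt => // i; apply/r_eq; [exact: xKo | exact: yKo |].
  exact: (congr1 (@^~ i) rxy).
apply/funext => i; apply/r_eq; [exact: xKo | exact: yKo |].
exact: le_lt_trans (le_vdist _ _ i) _.
Qed.

Lemma red_lift (y : 'I_N -> k) : exists2 x, point_Ko v x & (fun i => r (x i)) = y.
Proof.
have [_ _ _ _ r_surj] := hr.
have [x rx] := @fin_all_exists _ (fun=> K) (fun i a => in_Ko v a /\ r a = y i)
  (fun i => r_surj (y i)).
by exists x => [i|]; [case: (rx i) | apply/funext => i; case: (rx i)].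
Qed.

Lemma r_meval P x : poly_Ko v P -> point_Ko v x ->
  r P.@[x] = (red_poly r P).@[fun i => r (x i)].
Proof.
have [rD rM r1 _ _] := hr; move=> PKo xKo.
pose lifts a b := v a <= 1 /\ r a = b.
have liftsM a b a' b' : lifts a b -> lifts a' b' -> lifts (a * a') (b * b').
  by move=> [va <-] [va' <-]; split; rewrite ?rM // vM mulr_ile1 ?v_ge0.
have liftsX a n : v a <= 1 -> lifts (a ^+ n) (r a ^+ n).
  move=> va; elim: n => [|n IHn]; first by rewrite !expr0; split; rewrite ?v1.
  by rewrite !exprS; apply: liftsM.
suff [] : lifts P.@[x] (red_poly r P).@[fun i => r (x i)] by [].
rewrite /red_poly raddf_sum mevalE.
apply: (big_ind2 lifts) => [|a b a' b' [va <-] [va' <-]|m _].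
- by split; rewrite ?v0 ?r0.
- by split; rewrite ?rD ?vD_le.
rewrite /= mevalZ mevalX; apply: (liftsM); first by split; [exact: PKo|].
apply: (big_ind2 lifts) => [|*|i _]; [by split; rewrite ?v1 | exact: liftsM |].
exact: liftsX (xKo i).
Qed.

Lemma red_iter (F : 'I_N -> {mpoly K[N]}) n x :
  (forall i, poly_Ko v (F i)) -> point_Ko v x ->
  (fun i => r (iter n (polymap F) x i)) =
  iter n (polymap (fun i => red_poly r (F i))) (fun i => r (x i)).
Proof.
move=> F_Ko xKo; elim: n => [|n IHn] //=; rewrite -IHn; apply/funext => i.
exact: r_meval (F_Ko i) (iter_Ko (polymap_Ko F_Ko) n xKo).
Qed.

Lemma red_Ko x : point_Ko v x -> red v r x = Some (fun i => r (x i)).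
Proof.
by move=> xKo; rewrite /red; have -> : [forall i, v (x i) <= 1] by apply/forallP.
Qed.

End Residue.
End Points.
End NonArchimedean.

Theorem mainTheorem7 (R : realType) (K : fieldType) (p : nat) (v : K -> R)
    (k : fieldType) (r : K -> k) (N : nat) (F : 'I_N -> {mpoly K[N]}) :
  is_Cp p v ->
  is_residue_map v r ->
  restricted_lift p v F ->
  let Fbar := fun i => red_poly r (F i) in
  [/\ (forall x, Per (polymap F) x ->
         exists y, red v r x = Some y /\ Per (polymap Fbar) y),
      (forall x1 x2, Per (polymap F) x1 -> Per (polymap F) x2 ->
         red v r x1 = red v r x2 -> x1 = x2) &
      (forall y, Per (polymap Fbar) y ->
         exists x, Per (polymap F) x /\ red v r x = Some y)].
Proof.
move=> [_ _ _ hv [complete _ _]] hr [F_Ko [w [G [vp_le vw_lt1 G_Ko FG_le]]] escape] Fbar.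
have F_maps_Ko := polymap_Ko hv F_Ko.
have contract := restricted_lift_contract hv F_Ko G_Ko vp_le FG_le.
have Per_Ko x : Per (polymap F) x -> point_Ko v x := Per_escape escape.
split.
- move=> x Px; have xKo := Per_Ko x Px; have [n [n_gt0 fx]] := Px.
  exists (fun i => r (x i)); rewrite red_Ko //; split=> //.
  by exists n; rewrite -(red_iter hv hr n F_Ko xKo) fx.
- move=> x1 x2 P1 P2; have x1Ko := Per_Ko _ P1; have x2Ko := Per_Ko _ P2.
  rewrite !red_Ko // => -[/(red_eq hv hr x1Ko x2Ko)].
  exact: (Per_vdist_lt1_eq hv vw_lt1 F_maps_Ko contract P1 P2 x1Ko x2Ko).
move=> y; have [x0 x0Ko <-] := red_lift hr y; move=> [n [n_gt0 fy]].
have [|l fl lx0] := iter_fixed_point hv complete vw_lt1 F_maps_Ko contract n_gt0 x0Ko.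
  apply/(red_eq hv hr (iter_Ko F_maps_Ko n x0Ko) x0Ko).
  by rewrite (red_iter hv hr n F_Ko x0Ko) fy.
have lKo := point_Ko_vdist hv x0Ko (ltW lx0).
exists l; split; first by exists n.
by rewrite red_Ko //; congr Some; apply/(red_eq hv hr lKo x0Ko).
Qed.
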